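(* Let $f:\mathcal{X}\to\Delta^{k-1}$ be a classifier outputting confidence vectors. Let $P_S$ and $P_T$ be source and target distributions over $\mathcal{X}\times\mathcal{Y}$ with $k$ classes, and write $P_S(y)$, $P_T(y)$ for the source and target label distributions, viewed as distributions over one-hot vectors $\{0,1\}^k\cap\Delta^{k-1}$. Let $f_\# P_T(c)$ be the distribution of $f(x)$ for $x\sim P_T(x)$, and let $P_{\mathrm{pseudo}}(y)$ be the distribution of the one-hot vector $e_{\arg\max_j f_j(x)}$ for $x\sim P_T(x)$. Define $\hat\epsilon_{\mathrm{COT}}=W_\infty\bigl(f_\# P_T(c),P_S(y)\bigr)$. Then $$\hat\epsilon_{\mathrm{COT}}\ \ge\ 0.5\,W_\infty\bigl(P_{\mathrm{pseudo}}(y),P_T(y)\bigr)-W_\infty\bigl(P_S(y),P_T(y)\bigr).$$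
   Context: $\Delta^{k-1}=\{c\in\mathbb{R}^k: c_j\ge 0,\ \sum_j c_j=1\}$; $e_i$ is the $i$-th standard basis vector. For probability distributions $P,Q$ on $\mathbb{R}^k$, $W_\infty(P,Q)=\inf_{\pi\in\Pi(P,Q)}\int\|u-v\|_\infty\,d\pi(u,v)$ over couplings $\pi$ of $P$ and $Q$ (optimal transport distance with ground cost $\|u-v\|_\infty$). Ties in $\arg\max$ are broken by a fixed rule (e.g. smallest index). No assumption $P_S(y)=P_T(y)$ is made. *)

From HB Require Import structures.
From mathcomp Require Import all_boot all_order all_algebra.
From mathcomp Require Import all_classical all_reals all_analysis.
Set Implicit Arguments. Unset Strict Implicit. Unset Printing Implicit Defensive.
Import Order.TTheory GRing.Theory Num.Theory.
Import numFieldNormedType.Exports.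
Local Open Scope classical_set_scope.
Local Open Scope ring_scope.

(* R^k (row vectors) with its Borel sigma-algebra (generated by open sets of
   the product topology). *)
Definition Vk (R : realType) (k : nat) := g_sigma_algebraType (open : set (set 'rV[R]_k)).

(* Labels: k = n.+1 classes, 'I_n.+1, with the discrete sigma-algebra. *)
Definition label (n : nat) := 'I_n.+1.
HB.instance Definition _ n := Finite.on (label n).
HB.instance Definition _ n := isPointed.Build (label n) ord0.
HB.instance Definition _ n := @isMeasurable.Build default_measure_display
  (label n) discrete_measurable discrete_measurable0
  (@discrete_measurableC _) (@discrete_measurableU _).

Definition linf_dist (R : realType) (k : nat) (u v : 'rV[R]_k) : R :=
  \big[Num.max/0]_(i < k) `|u ord0 i - v ord0 i|.

Definition in_simplex (R : realType) (k : nat) (c : 'rV[R]_k) : Prop :=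
  (forall j, 0 <= c ord0 j) /\ \sum_(j < k) c ord0 j = 1.

Definition onehot (R : realType) (k : nat) (i : 'I_k) : 'rV[R]_k :=
  \row_(j < k) (i == j)%:R.

(* argmax with a fixed deterministic tie-breaking rule (that of Order.arg_max) *)
Definition argmax (R : realType) (n : nat) (c : 'rV[R]_n.+1) : 'I_n.+1 :=
  [arg max_(i > ord0) c ord0 i]%O.

Definition is_coupling (R : realType) (k : nat)
  (pi : probability (Vk R k * Vk R k)%type R) (P Q : set (Vk R k) -> \bar R) : Prop :=
  forall A : set (Vk R k), measurable A ->
    pi (fst @^-1` A) = P A /\ pi (snd @^-1` A) = Q A.

Definition Winf (R : realType) (k : nat) (P Q : set (Vk R k) -> \bar R) : \bar R :=
  ereal_inf [set (\int[pi]_z (linf_dist z.1 z.2)%:E)%E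
            | pi in [set pi : probability (Vk R k * Vk R k)%type R | is_coupling pi P Q]].

From HB Require Import structures.
From mathcomp Require Import all_boot all_order all_algebra.
From mathcomp Require Import all_classical all_reals all_analysis.
From mathcomp Require Import measurable_realfun lra.
Set Implicit Arguments. Unset Strict Implicit. Unset Printing Implicit Defensive.
Import Order.TTheory GRing.Theory Num.Theory.
Import numFieldNormedType.Exports.
Local Open Scope classical_set_scope.
Local Open Scope ring_scope.

(* Let B_j be the open sup-norm ball of radius 1/2 around the one-hot vector e_j.
   Under a coupling of mu with a law nu on one-hot vectors, a pair (c, e_j) costs
   at least 1/2 unless c lies in B_j, and the mass of B_j x {e_j} is at most
   min(mu B_j, nu {e_j}); hence 2 W(mu, nu) >= 1 - sum_j min(mu B_j, nu {e_j}).
   As B_j lies in {argmax = j}, this gives 2 eps_COT >= TV(P_pseudo, P_S(y)) and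
   2 W(P_S(y), P_T(y)) >= TV(P_S(y), P_T(y)), whereas the maximal coupling gives
   W(P_pseudo, P_T(y)) <= TV(P_pseudo, P_T(y)). The triangle inequality for TV
   concludes. *)

Section linf_dist.
Variables (R : realType) (k : nat).
Implicit Types (u v : 'rV[R]_k) (i j : 'I_k).

Lemma linf_dist_ge_coord u v i : `|u ord0 i - v ord0 i| <= linf_dist u v.
Proof. exact: (le_bigmax _ (fun i => `|u ord0 i - v ord0 i|)). Qed.

Lemma linf_dist_le u v r : 0 <= r ->
  (forall i, `|u ord0 i - v ord0 i| <= r) -> linf_dist u v <= r.
Proof. by move=> r0 le_r; apply: bigmax_le. Qed.

Lemma linf_dist_ge0 u v : 0 <= linf_dist u v.
Proof. by rewrite /linf_dist; elim/big_ind: _ => // x y; rewrite le_max => ->. Qed.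

Lemma linf_dist_eq0 u v : linf_dist u v = 0 <-> u = v.
Proof.
split=> [uv|->]; last first.
  by apply/eqP; rewrite eq_le linf_dist_ge0 andbT linf_dist_le // => i; rewrite subrr normr0.
apply/matrixP => r i; rewrite [r]ord1; apply/eqP; rewrite -subr_eq0 -normr_eq0.
by rewrite eq_le normr_ge0 andbT -uv linf_dist_ge_coord.
Qed.

Lemma onehotE i j : onehot R i ord0 j = (i == j)%:R.
Proof. by rewrite mxE. Qed.

Lemma linf_dist_onehot i j : linf_dist (onehot R i) (onehot R j) = (i != j)%:R.
Proof.
apply/eqP; rewrite eq_le; apply/andP; split.
  apply: linf_dist_le => // l; rewrite !onehotE.
  case: (eqVneq i j) => [->|_]; first by rewrite subrr normr0.
  by case: (i == l); case: (j == l); rewrite /= ?subrr ?subr0 ?sub0r ?normrN ?normr1 ?normr0.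
case: (eqVneq i j) => [_|ij]; first exact: linf_dist_ge0.
apply: le_trans (linf_dist_ge_coord _ _ i).
by rewrite !onehotE eqxx eq_sym (negbTE ij) subr0 normr1.
Qed.

Lemma onehot_inj : injective (@onehot R k).
Proof.
move=> i j /(congr1 (fun u => u ord0 i)); rewrite !onehotE eqxx.
by case: eqP => // _ /eqP; rewrite oner_eq0.
Qed.
End linf_dist.

Section borel_rV.
Variables (R : realType) (k : nat).
Local Notation V := (Vk R k).

Lemma measurable_coord (i : 'I_k) : measurable_fun [set: V] (fun c : V => c ord0 i).
Proof.
apply: (measurability _ (RGenOpens.measurableE R)).
move=> _ [_ [a [b ->] <-]]; rewrite setTI; apply: sub_gen_smallest.
apply: open_comp; last exact: interval_open.
by move=> x _; exact: coord_continuous.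
Qed.

Lemma measurable_fun_linf_dist d (T : measurableType d) (F G : T -> V) :
  measurable_fun [set: T] F -> measurable_fun [set: T] G ->
  measurable_fun [set: T] (fun x => linf_dist (F x) (G x)).
Proof.
move=> mF mG; rewrite /linf_dist; elim: (index_enum _) => [|i s IH].
  by under eq_fun do rewrite big_nil; exact: measurable_cst.
under eq_fun do rewrite big_cons; apply: measurable_maxr => //.
apply: measurableT_comp => //; apply: measurable_funB.
  exact: measurableT_comp (measurable_coord i) mF.
exact: measurableT_comp (measurable_coord i) mG.
Qed.

Lemma measurable_linf_dist_preimage (v : V) (B : set R) : measurable B ->
  measurable [set c : V | B (linf_dist c v)].
Proof.
move=> mB; rewrite -[X in measurable X]setTI.
by have := measurable_fun_linf_dist (@measurable_id _ V setT) (measurable_cst v) measurableT mB.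
Qed.

Lemma measurable_set1_rV (v : V) : measurable [set v].
Proof.
rewrite [X in measurable X](_ : _ = [set c : V | [set 0] (linf_dist c v)]).
  exact: measurable_linf_dist_preimage.
by apply/seteqP; split => c /=; rewrite linf_dist_eq0.
Qed.

Definition onehots : set V := range (@onehot R k).

Lemma measurable_onehots : measurable onehots.
Proof.
rewrite [X in measurable X](_ : _ = \bigcup_(j in [set: 'I_k]) [set onehot R j]).
  by apply: fin_bigcup_measurable => [|j _]; [exact: finite_finset|exact: measurable_set1_rV].
by apply/seteqP; split => [_ [j _ <-]|_ [j _ ->]]; exists j.
Qed.

Definition onehot_ball (j : 'I_k) : set V := [set c | linf_dist c (onehot R j) < 2^-1].

Lemma measurable_onehot_ball j : measurable (onehot_ball j).
Proof.
rewrite [X in measurable X](_ : _ = [set c : V | [set` `]-oo, 2^-1[] (linf_dist c (onehot R j))]).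
  exact: measurable_linf_dist_preimage.
by apply/seteqP; split => c /=; rewrite in_itv.
Qed.

Lemma onehot_ballP i j : onehot_ball j (onehot R i) <-> i = j.
Proof.
rewrite /onehot_ball /= linf_dist_onehot.
split=> [|<-]; last by rewrite eqxx /=; lra.
by case: eqVneq => //= _ lt1; exfalso; lra.
Qed.
End borel_rV.

Lemma measurable_fibers_factor d (T : measurableType d) (A B : finType)
    (h : T -> B) (g : T -> A) :
  (forall b, measurable (h @^-1` [set b])) ->
  (forall x y, h x = h y -> g x = g y) ->
  forall a, measurable (g @^-1` [set a]).
Proof.
move=> mh hg a.
rewrite [X in measurable X](_ : _ =
    \bigcup_(b in [set b | exists2 x, h x = b & g x = a]) h @^-1` [set b]).
  by apply: fin_bigcup_measurable => [|b _]; [exact: finite_finset|exact: mh].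
apply/seteqP; split=> [x gxa|x [_ [y <- gya] /= hxy]]; first by exists (h x) => //; exists x.
by rewrite /= -gya; exact: hg.
Qed.

Section order_pattern.
Variables (R : realType) (k : nat).

Definition order_pattern (c : 'rV[R]_k) : {ffun 'I_k * 'I_k -> bool} :=
  [ffun p => c ord0 p.1 <= c ord0 p.2].

Lemma measurable_order_pattern_fiber b :
  measurable (order_pattern @^-1` [set b] : set (Vk R k)).
Proof.
rewrite [X in measurable X](_ : _ = \bigcap_(p in [set: 'I_k * 'I_k])
    [set c : Vk R k | (c ord0 p.1 <= c ord0 p.2) = b p]).
  apply: fin_bigcap_measurable => [|p _]; first exact: finite_finset.
  rewrite -[X in measurable X]setTI.
  by have := measurable_fun_ler (measurable_coord p.1) (measurable_coord p.2)
    measurableT (I : measurable [set b p]).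
apply/seteqP; split=> [c <- p _|c bc]; first by rewrite ffunE.
by apply/ffunP => p; rewrite ffunE bc.
Qed.
End order_pattern.

Section argmax.
Variables (R : realType) (n : nat).
Local Notation V := (Vk R n.+1).

Lemma argmax_ge (c : 'rV[R]_n.+1) j : c ord0 j <= c ord0 (argmax c).
Proof. by rewrite /argmax; case: arg_maxP => // i _; apply. Qed.

Lemma argmax_order_pattern (c c' : 'rV[R]_n.+1) :
  order_pattern c = order_pattern c' -> argmax c = argmax c'.
Proof.
move=> /ffunP cc'; rewrite /argmax /Order.arg_max /extremum; congr odflt.
by apply: eq_pick => i /=; apply: eq_forallb => j; have := cc' (j, i); rewrite !ffunE => ->.
Qed.

Lemma measurable_argmax_fiber j : measurable (@argmax R n @^-1` [set j] : set V).
Proof.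
exact: (measurable_fibers_factor (@measurable_order_pattern_fiber R n.+1) argmax_order_pattern).
Qed.

Lemma onehot_ball_argmax (c : V) j : onehot_ball j c -> argmax c = j.
Proof.
rewrite /onehot_ball /= => cj; apply/eqP/negPn/negP => aj.
have := linf_dist_ge_coord c (onehot R j) j.
have := linf_dist_ge_coord c (onehot R j) (argmax c).
have := argmax_ge c j.
rewrite !onehotE eqxx eq_sym (negbTE aj) subr0 !ler_norml /= => ? /andP[? ?] /andP[? ?].
lra.
Qed.
End argmax.

Section onehot_law.
Variables (R : realType) (k : nat).
Local Notation V := (Vk R k).

Definition onehot_law (w : 'I_k -> R) (A : set V) : \bar R :=
  (\sum_i w i * \1_A (onehot R i : V))%:E.

Lemma onehot_law_onehots w : onehot_law w (@onehots R k) = (\sum_i w i)%:E.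
Proof. by congr (_%:E); apply: eq_bigr => i _; rewrite indicE mem_set ?mulr1 //; exists i. Qed.

Lemma onehot_law_fiber w (A : set V) j :
  (forall i, A (onehot R i) <-> i = j) -> onehot_law w A = (w j)%:E.
Proof.
move=> Aj; congr (_%:E); rewrite (bigD1 j) //= big1 ?addr0 => [|i ij]; rewrite indicE.
  by rewrite mem_set ?mulr1 //; exact/Aj.
by rewrite memNset ?mulr0 // => /Aj /eqP; rewrite (negbTE ij).
Qed.
End onehot_law.

Section label_weight.
Context (R : realType) (k : nat) d (T : measurableType d).
Variables (P : probability T R) (g : T -> 'I_k).
Hypothesis mg : forall j, measurable (g @^-1` [set j]).

Definition label_weight j : R := fine (P (g @^-1` [set j])).

Lemma label_weightE j : P (g @^-1` [set j]) = (label_weight j)%:E.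
Proof. by rewrite fineK // fin_num_measure. Qed.

Lemma label_weight_ge0 j : 0 <= label_weight j.
Proof. exact: fine_ge0. Qed.

Lemma pushforward_onehot :
  pushforward P (fun x => onehot R (g x) : Vk R k) = onehot_law label_weight.
Proof.
apply/funext => A; rewrite /pushforward.
rewrite [X in P X](_ : _ = \big[setU/set0]_(j < k | `[< A (onehot R j) >]) g @^-1` [set j]).
  rewrite measure_bigsetU_ord_cond //; last first.
    apply/trivIsetP => i j _ _ ij; apply/seteqP; split => // x [/= gi gj].
    by move: ij; rewrite -gi -gj eqxx.
  rewrite /onehot_law -sumEFin big_mkcond /=; apply: eq_bigr => j _.
  rewrite indicE label_weightE.
  by case: asboolP => Aj; rewrite ?(mem_set Aj) ?(memNset Aj) ?mulr1 ?mulr0.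
rewrite -(bigcup_seq_cond (index_enum _)).
apply/seteqP; split=> [x Ax|x [j /= /andP[_ /asboolP Aj] ->//]].
by exists (g x) => //=; rewrite mem_index_enum; exact/asboolP.
Qed.

Lemma sum_label_weight : \sum_j label_weight j = 1.
Proof.
have := congr1 (fun mu => mu (@onehots R k)) pushforward_onehot.
rewrite /= onehot_law_onehots /pushforward.
rewrite [X in P X](_ : _ = setT) ?probability_setT => [[]//|].
by apply/seteqP; split => // x _; exists (g x).
Qed.
End label_weight.

Section total_variation.
Variables (R : realType) (k : nat).

Definition tvd (p t : 'I_k -> R) : R := 1 - \sum_i Num.min (p i) (t i).

Lemma tvd_triangle (p s t : 'I_k -> R) : \sum_i s i = 1 -> tvd p t <= tvd p s + tvd s t.
Proof.
move=> s_sum1; rewrite /tvd.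
have : \sum_i (Num.min (p i) (s i) + Num.min (s i) (t i)) <= \sum_i (s i + Num.min (p i) (t i)).
  by apply: ler_sum => i _; case: (leP (p i) (s i)); case: (leP (s i) (t i));
    case: (leP (p i) (t i)) => *; lra.
rewrite !big_split /= s_sum1; lra.
Qed.
End total_variation.

Section coupling_lower_bound.
Variables (R : realType) (k : nat).
Local Notation V := (Vk R k).

Let measurable_fst_preimage (A : set V) : measurable A -> measurable (fst @^-1` A : set (V * V)).
Proof. by move=> mA; rewrite -[X in measurable X]setTI; apply: measurable_fst. Qed.

Let measurable_snd_preimage (A : set V) : measurable A -> measurable (snd @^-1` A : set (V * V)).
Proof. by move=> mA; rewrite -[X in measurable X]setTI; apply: measurable_snd. Qed.

Definition onehot_match (j : 'I_k) : set (V * V) := onehot_ball j `*` [set onehot R j].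

Lemma measurable_onehot_match j : measurable (onehot_match j).
Proof. by apply: measurableX; [exact: measurable_onehot_ball|exact: measurable_set1_rV]. Qed.

Lemma indic_onehots_le (z : V * V) :
  \1_(snd @^-1` (@onehots R k)) z <=
    2 * linf_dist z.1 z.2 + \sum_j \1_(onehot_match j) z.
Proof.
case: z => c v; rewrite indicE /=.
have match_ge0 (P : pred 'I_k) w : 0 <= \sum_(j | P j) \1_(onehot_match j) (c, w) :> R.
  by apply: sumr_ge0 => j _; rewrite indicE.
have := linf_dist_ge0 c v.
have [[j _ <-]|nv] := pselect (onehots v); last first.
  by have := match_ge0 xpredT v; rewrite memNset //= => ? ?; lra.
rewrite mem_set /=; last by exists j.
have [cj|ncj] := pselect (onehot_ball j c).
  rewrite (bigD1 j) //= indicE mem_set //=.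
  have := match_ge0 (fun i => i != j) (onehot R j); lra.
have := match_ge0 xpredT (onehot R j).
have : 2^-1 <= linf_dist c (onehot R j) by rewrite leNgt; exact/negP.
lra.
Qed.

Local Open Scope ereal_scope.

Lemma measure_onehots_le (pi : {measure set (V * V) -> \bar R}) :
  pi (snd @^-1` (@onehots R k)) <=
    2%:E * \int[pi]_z (linf_dist z.1 z.2)%:E + \sum_j pi (onehot_match j).
Proof.
have monehots := measurable_snd_preimage (@measurable_onehots R k).
have mlinf : measurable_fun [set: V * V] (fun z => linf_dist z.1 z.2).
  exact: measurable_fun_linf_dist measurable_fst measurable_snd.
have mmatch j : measurable_fun [set: V * V] (fun z => (\1_(onehot_match j) z : R)%:E).
  by apply/measurable_EFinP/measurable_indic; exact: (measurable_onehot_match j).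
rewrite -[X in pi X]setIT -integral_indic //.
apply: (@le_trans _ _
  (\int[pi]_z (2 * linf_dist z.1 z.2 + \sum_j \1_(onehot_match j) z)%:E)).
  apply: ge0_le_integral => //.
  - by apply/measurable_EFinP; exact: measurable_indic.
  - apply/measurable_EFinP; apply: measurable_funD; first exact: measurable_funM.
    by apply: measurable_sum => j; apply/measurable_EFinP; exact: mmatch.
  - by move=> z _; rewrite lee_fin; exact: indic_onehots_le.
under eq_integral do rewrite EFinD EFinM -sumEFin.
rewrite ge0_integralD //; last 4 first.
- by move=> z _; rewrite -EFinM lee_fin mulr_ge0 ?linf_dist_ge0.
- by apply: emeasurable_funM => //; exact/measurable_EFinP.
- by move=> z _; apply: sume_ge0 => j _; rewrite lee_fin indicE.
- by apply: emeasurable_sum => j; exact: mmatch.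
rewrite ge0_integralZl_EFin //; last 2 first.
- by move=> z _; rewrite lee_fin linf_dist_ge0.
- exact/measurable_EFinP.
rewrite ge0_integral_sum //.
have int_match j : \int[pi]_z (\1_(onehot_match j) z : R)%:E = pi (onehot_match j).
  by rewrite integral_indic ?setIT //; exact: (measurable_onehot_match j).
by under eq_bigr do rewrite int_match.
Qed.

Lemma Winf_onehot_law_ge (mu : set V -> \bar R) (a b : 'I_k -> R) :
  (\sum_j b j = 1)%R -> (forall j, mu (onehot_ball j) <= (a j)%:E) ->
  (2^-1 * tvd a b)%:E <= Winf mu (onehot_law b).
Proof.
move=> b1 mu_a; apply/ereal_infP => _ [pi pi_mu_b <-].
have pi_onehots : pi (snd @^-1` (@onehots R k)) = 1.
  by have [_ ->] := pi_mu_b _ (@measurable_onehots R k); rewrite onehot_law_onehots b1.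
have pi_match j : pi (onehot_match j) <= (Num.min (a j) (b j))%:E.
  rewrite EFin_min le_min; apply/andP; split.
    apply: le_trans (mu_a j); have [<- _] := pi_mu_b _ (measurable_onehot_ball j).
    apply: le_measure; rewrite ?inE; [exact: (measurable_onehot_match j)| |by move=> z []].
    exact: measurable_fst_preimage (measurable_onehot_ball j).
  have b_j : onehot_law b [set onehot R j] = (b j)%:E.
    by apply: onehot_law_fiber => i; split=> [/onehot_inj|->].
  rewrite -b_j; have [_ <-] := pi_mu_b _ (measurable_set1_rV (onehot R j)).
  apply: le_measure; rewrite ?inE; [exact: (measurable_onehot_match j)| |by move=> z []].
  exact: measurable_snd_preimage (measurable_set1_rV (onehot R j)).
have sum_match : \sum_j pi (onehot_match j) <= \sum_j (Num.min (a j) (b j))%:E.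
  by apply: lee_sum => j _; exact: pi_match.
have : 1 <= 2%:E * \int[pi]_z (linf_dist z.1 z.2)%:E + (\sum_j Num.min (a j) (b j))%:E.
  by rewrite -pi_onehots -sumEFin; exact: le_trans (measure_onehots_le pi) (leeD2l _ sum_match).
have : 0 <= \int[pi]_z (linf_dist z.1 z.2)%:E.
  by apply: integral_ge0 => z _; rewrite lee_fin linf_dist_ge0.
case: (\int[pi]_z _) => [r| |] //= r0; last by rewrite leey.
by rewrite /tvd -EFinM -EFinD !lee_fin => ?; lra.
Qed.
End coupling_lower_bound.

Section onehot_coupling.
Variables (R : realType) (n : nat).
Local Notation V := (Vk R n.+1).
Variables (w : 'I_n.+1 -> 'I_n.+1 -> R) (w_ge0 : forall i j, 0 <= w i j).
Hypothesis w_sum1 : \sum_i \sum_j w i j = 1.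
Local Open Scope ereal_scope.

Definition onehot_pair (i j : 'I_n.+1) : V * V := (onehot R i, onehot R j).

(* [msum] sums a [nat]-indexed family of measures, hence the [inord]. *)
Definition onehot_pair_measure : {measure set (V * V) -> \bar R} :=
  msum (fun i => msum (fun j => mscale (NngNum (w_ge0 (inord i) (inord j)))
    \d_(onehot_pair (inord i) (inord j))) n.+1) n.+1.

Lemma onehot_pair_measureE A :
  onehot_pair_measure A = \sum_i \sum_j (w i j)%:E * \d_(onehot_pair i j) A.
Proof.
by apply: eq_bigr => i _; apply: eq_bigr => j _; rewrite /mscale /= !inord_val.
Qed.

(* [mnormalize] merely equips the mass-one measure [onehot_pair_measure] with a
   probability structure, see [onehot_couplingE]. *)
Definition onehot_coupling : probability (V * V)%type R :=
  mnormalize onehot_pair_measure \d_(onehot_pair ord0 ord0).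

Lemma onehot_couplingE :
  onehot_coupling = onehot_pair_measure :> (set (V * V)%type -> \bar R).
Proof.
have mass1 : onehot_pair_measure setT = 1.
  rewrite onehot_pair_measureE -w_sum1 -sumEFin; apply: eq_bigr => i _.
  by rewrite -sumEFin; apply: eq_bigr => j _; rewrite diracT mule1.
by apply/funext => A; rewrite /onehot_coupling /= /mnormalize mass1 onee_eq0 /= invr1 mule1.
Qed.

Lemma is_coupling_onehot_coupling :
  is_coupling onehot_coupling (onehot_law (fun i => \sum_j w i j)%R)
                              (onehot_law (fun j => \sum_i w i j)%R).
Proof.
move=> A _; rewrite onehot_couplingE !onehot_pair_measureE; split.
  rewrite /onehot_law -sumEFin; apply: eq_bigr => i _; rewrite mulr_suml -sumEFin.
  by apply: eq_bigr => j _; rewrite diracE indicE EFinM.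
rewrite /onehot_law exchange_big -sumEFin; apply: eq_bigr => j _; rewrite mulr_suml -sumEFin.
by apply: eq_bigr => i _; rewrite diracE indicE EFinM.
Qed.

Lemma integral_onehot_coupling :
  \int[onehot_coupling]_z (linf_dist z.1 z.2)%:E =
    (\sum_i \sum_j w i j * (i != j)%:R)%:E.
Proof.
have mlinf : measurable_fun [set: V * V] (fun z => (linf_dist z.1 z.2)%:E).
  by apply/measurable_EFinP; exact: measurable_fun_linf_dist measurable_fst measurable_snd.
have linf_ge0 (z : V * V) : [set: V * V] z -> 0 <= (linf_dist z.1 z.2)%:E.
  by rewrite lee_fin linf_dist_ge0.
rewrite onehot_couplingE ge0_integral_measure_sum // -sumEFin; apply: eq_bigr => i _.
rewrite ge0_integral_measure_sum // -sumEFin; apply: eq_bigr => j _.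
rewrite ge0_integral_mscale // integral_dirac // diracT mul1e /=.
by rewrite !inord_val linf_dist_onehot.
Qed.

Lemma Winf_onehot_law_le_offdiag :
  Winf (onehot_law (fun i => \sum_j w i j)%R) (onehot_law (fun j => \sum_i w i j)%R) <=
    (\sum_i \sum_j w i j * (i != j)%:R)%:E.
Proof.
rewrite -integral_onehot_coupling; apply: ereal_inf_lbound.
by exists onehot_coupling => //; exact: is_coupling_onehot_coupling.
Qed.
End onehot_coupling.

Section maximal_coupling.
Variables (R : realType) (k : nat) (p t : 'I_k -> R).
Hypotheses (p_ge0 : forall i, 0 <= p i) (t_ge0 : forall i, 0 <= t i).
Hypotheses (p_sum1 : \sum_i p i = 1) (t_sum1 : \sum_i t i = 1).

Local Notation m i := (Num.min (p i) (t i)).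
Local Notation tv := (tvd p t).

(* When [tv = 0], [p = t] and the residual masses vanish, so the junk value
   [x / 0 = 0] is harmless. *)
Definition maximal_coupling i j := (i == j)%:R * m i + (p i - m i) * (t j - m j) / tv.

Let residual_p_ge0 i : 0 <= p i - m i.
Proof. by rewrite subr_ge0 ge_min lexx. Qed.

Let residual_t_ge0 i : 0 <= t i - m i.
Proof. by rewrite subr_ge0 ge_min lexx orbT. Qed.

Let sum_residual_p : \sum_i (p i - m i) = tv.
Proof. by rewrite sumrB p_sum1. Qed.

Let sum_residual_t : \sum_i (t i - m i) = tv.
Proof. by rewrite sumrB t_sum1. Qed.

Let tv_ge0 : 0 <= tv.
Proof. by rewrite -sum_residual_p; apply: sumr_ge0 => l _; exact: residual_p_ge0. Qed.

Let residual_ge0 i j : 0 <= (p i - m i) * (t j - m j) / tv.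
Proof. by rewrite divr_ge0 ?mulr_ge0. Qed.

Lemma maximal_coupling_ge0 i j : 0 <= maximal_coupling i j.
Proof. by rewrite addr_ge0 // mulr_ge0 // le_min p_ge0 t_ge0. Qed.

Lemma maximal_coupling_row i : \sum_j maximal_coupling i j = p i.
Proof.
rewrite big_split /= (bigD1 i) //= eqxx mul1r big1 ?addr0 => [|j]; last first.
  by rewrite eq_sym => /negbTE ->; rewrite mul0r.
rewrite -mulr_suml -mulr_sumr sum_residual_t.
have [tv0|tv_neq0] := eqVneq tv 0; last by rewrite mulfK // addrC subrK.
have /psumr_eq0P res0 : \sum_i (p i - m i) = 0 by rewrite sum_residual_p.
by rewrite tv0 mulr0 mul0r addr0; apply/eqP; rewrite eq_sym -subr_eq0 res0.
Qed.

Lemma maximal_coupling_col j : \sum_i maximal_coupling i j = t j.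
Proof.
rewrite big_split /= (bigD1 j) //= eqxx mul1r big1 ?addr0 => [|i]; last first.
  by move=> /negbTE ->; rewrite mul0r.
rewrite -mulr_suml -mulr_suml sum_residual_p.
have [tv0|tv_neq0] := eqVneq tv 0; last by rewrite [tv * _]mulrC mulfK // addrC subrK.
have /psumr_eq0P res0 : \sum_i (t i - m i) = 0 by rewrite sum_residual_t.
by rewrite tv0 mul0r mul0r addr0; apply/eqP; rewrite eq_sym -subr_eq0 res0.
Qed.

Lemma maximal_coupling_offdiag :
  \sum_i \sum_j maximal_coupling i j * (i != j)%:R <= tv.
Proof.
have row_offdiag i : \sum_j maximal_coupling i j * (i != j)%:R = p i - maximal_coupling i i.
  rewrite -maximal_coupling_row (bigD1 i) //= [in RHS](bigD1 i) //= eqxx mulr0 add0r.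
  rewrite [maximal_coupling i i + _]addrC addrK; apply: eq_bigr => j.
  by rewrite eq_sym => ->; rewrite mulr1.
rewrite (eq_bigr _ (fun i _ => row_offdiag i)) sumrB p_sum1 lerD2l lerN2.
by apply: ler_sum => i _; rewrite /maximal_coupling eqxx mul1r lerDl.
Qed.
End maximal_coupling.

Lemma Winf_onehot_law_le (R : realType) (n : nat) (p t : 'I_n.+1 -> R) :
  (forall i, 0 <= p i) -> (forall i, 0 <= t i) -> \sum_i p i = 1 -> \sum_i t i = 1 ->
  (Winf (onehot_law p) (onehot_law t) <= (tvd p t)%:E)%E.
Proof.
move=> p_ge0 t_ge0 p_sum1 t_sum1.
have w_sum1 : \sum_i \sum_j maximal_coupling p t i j = 1.
  by under eq_bigr do rewrite maximal_coupling_row //.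
have := Winf_onehot_law_le_offdiag (maximal_coupling_ge0 p_ge0 t_ge0 p_sum1) w_sum1.
under [X in onehot_law X]funext do rewrite maximal_coupling_row //.
under [X in Winf _ (onehot_law X)]funext do rewrite maximal_coupling_col //.
by move/le_trans; apply; rewrite lee_fin maximal_coupling_offdiag.
Qed.

Theorem mainTheorem6 (R : realType) (n : nat) (d : measure_display)
  (X : measurableType d) (f : X -> 'rV[R]_n.+1)
  (f_meas : measurable_fun [set: X] (f : X -> Vk R n.+1))
  (f_simplex : forall x, in_simplex (f x))
  (PS PT : probability (X * label n)%type R) :
  let fPT := pushforward PT (fun z : X * label n => (f z.1 : Vk R n.+1)) in
  let PSy := pushforward PS (fun z : X * label n => (onehot R z.2 : Vk R n.+1)) in
  let PTy := pushforward PT (fun z : X * label n => (onehot R z.2 : Vk R n.+1)) in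
  let Ppseudo := pushforward PT
                   (fun z : X * label n => (onehot R (argmax (f z.1)) : Vk R n.+1)) in
  let eps_COT := Winf fPT PSy in
  (eps_COT >= (2^-1)%:E * Winf Ppseudo PTy - Winf PSy PTy)%E.
Proof.
cbv zeta.
have mf : measurable_fun [set: X * label n] (fun z => f z.1 : Vk R n.+1).
  exact: measurableT_comp f_meas measurable_fst.
have mlabel j : measurable ((fun z : X * label n => z.2) @^-1` [set j]).
  by rewrite -[X in measurable X]setTI; exact: (measurable_snd measurableT [set j] I).
have mpseudo j : measurable ((fun z : X * label n => argmax (f z.1)) @^-1` [set j]).
  by rewrite -[X in measurable X]setTI; have := mf measurableT _ (@measurable_argmax_fiber R n j).
rewrite !pushforward_onehot //.
set s := label_weight PS _; set t := label_weight PT (fun z => z.2).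
set p := label_weight PT _.
have ball_le_pseudo j : (pushforward PT (fun z => f z.1 : Vk R n.+1) (onehot_ball j) <= (p j)%:E)%E.
  rewrite /pushforward -label_weightE //; apply: le_measure; rewrite ?inE //.
    by rewrite -[X in measurable X]setTI; have := mf measurableT _ (measurable_onehot_ball j).
  by move=> z; exact: onehot_ball_argmax.
have eps_COT_ge := Winf_onehot_law_ge (sum_label_weight PS mlabel) ball_le_pseudo.
have W_source_target_ge : ((2^-1 * tvd s t)%:E <= Winf (onehot_law s) (onehot_law t))%E.
  apply: Winf_onehot_law_ge (sum_label_weight PT mlabel) _ => j.
  by rewrite (onehot_law_fiber _ (fun i => onehot_ballP R i j)).
have W_pseudo_target_le : (Winf (onehot_law p) (onehot_law t) <= (tvd p t)%:E)%E.
  by apply: Winf_onehot_law_le; (exact: label_weight_ge0 || exact: sum_label_weight).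
apply: le_trans eps_COT_ge.
apply: le_trans (leeB (lee_wpmul2l _ W_pseudo_target_le) W_source_target_ge) _.
  by rewrite lee_fin.
by rewrite -EFinM -EFinB lee_fin; have := tvd_triangle p t (sum_label_weight PS mlabel); lra.
Qed.
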